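(* Let $(S,K,I)$ be a split graph and let $P=v_1v_2\ldots v_n$, with $n\geq 2$, be an induced path in the factor graph $\Phi(S)$. If $d_1=\max\{d_i: i\in[n]\}$, then for each $i\in[n]$ we have $d_i\geq d_j$ and $N_i\supseteq N_j$ for all $j$ with $i+2\leq j\leq n$.
   Context: A split graph $(S,K,I)$ is a graph $S$ together with a fixed partition $V(S)=K\dot\cup I$, where $K$ is a clique and $I$ is an independent set. For a vertex $v_i$ (or $i$) of $S$, $N_i$ denotes its open neighborhood in $S$ and $d_i=|N_i|$ its degree in $S$; for $u,v$ write $\eta_{uv}=|N_u\cap N_v|$. The factor graph $\Phi(S)$ is the loopless multigraph with vertex set $I$ in which, for distinct $u,v\in I$, there is one edge joining $u$ and $v$ for each 2-switch of $S$ acting on $u$ and $v$ (a 2-switch replaces edges $ab,cd$ with $ac,bd$ when $ab,cd\in E(S)$ and $ac,bd\notin E(S)$); equivalently, the multiplicity of the edge $uv$ is $\sigma_{uv}=(d_u-\eta_{uv})(d_v-\eta_{uv})$, and $u,v$ are adjacent in $\Phi(S)$ iff $\sigma_{uv}>0$. An induced path $v_1\ldots v_n$ in $\Phi(S)$ consists of distinct vertices with $v_iv_{i+1}$ adjacent for all $i$ and no other pair $v_iv_j$ adjacent (multiplicities are ignored for adjacency). *)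

From mathcomp Require Import all_boot.
Set Implicit Arguments. Unset Strict Implicit. Unset Printing Implicit Defensive.

Definition simple_graph (T : finType) (e : rel T) : Prop :=
  symmetric e /\ irreflexive e.

Definition split_graph (T : finType) (e : rel T) (K I : {set T}) : Prop :=
  [/\ simple_graph e,
      K :|: I = [set: T],
      K :&: I = set0,
      (forall x y, x \in K -> y \in K -> x != y -> e x y) &
      (forall x y, x \in I -> y \in I -> ~~ e x y)].

Definition nbhd (T : finType) (e : rel T) (v : T) : {set T} := [set y | e v y].
Definition deg (T : finType) (e : rel T) (v : T) : nat := #|nbhd e v|.
Definition eta (T : finType) (e : rel T) (u v : T) : nat :=
  #|nbhd e u :&: nbhd e v|.
(* sigma_{uv} = (d_u - eta_{uv}) (d_v - eta_{uv}) : multiplicity of uv in Phi(S) *)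
Definition sigma (T : finType) (e : rel T) (u v : T) : nat :=
  (deg e u - eta e u v) * (deg e v - eta e u v).

Definition phi_adj (T : finType) (e : rel T) (I : {set T}) (u v : T) : bool :=
  [&& u \in I, v \in I, u != v & 0 < sigma e u v].

(* v_0 ... v_{n-1} is an induced path in Phi(S) (0-based indexing) *)
Definition induced_path (T : finType) (e : rel T) (I : {set T})
    (n : nat) (v : nat -> T) : Prop :=
  [/\ (forall i, i < n -> v i \in I),
      (forall i j, i < n -> j < n -> v i = v j -> i = j),
      (forall i, i.+1 < n -> phi_adj e I (v i) (v i.+1)) &
      (forall i j, i < n -> j < n -> i.+1 < j -> ~~ phi_adj e I (v i) (v j))].

From mathcomp Require Import all_boot zify.

(* Two distinct vertices of I are adjacent in the factor graph exactly when
   their neighbourhoods in S are incomparable under inclusion.  Along the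
   induced path, vertices at distance at least 2 therefore have comparable
   neighbourhoods while consecutive ones do not.  Induction on i then shows
   N_j ⊆ N_i for i + 2 <= j: for i = 1 the maximality of d_1 forbids a strict
   inclusion N_1 ⊂ N_j, and N_(i+1) ⊆ N_j ⊆ N_i would make v_i, v_(i+1)
   non-adjacent. *)

Section Neighbourhoods.

Variables (T : finType) (e : rel T).

Lemma etaC u v : eta e u v = eta e v u.
Proof. by rewrite /eta setIC. Qed.

Lemma deg_sub_eta_eq0 u v :
  (deg e u - eta e u v == 0) = (nbhd e u \subset nbhd e v).
Proof.
by rewrite subn_eq0 /deg /eta (geq_leqif (subset_leqif_card (subsetIl _ _))) subsetIidl.
Qed.

Lemma phi_adjE (I : {set T}) u v :
  phi_adj e I u v =
  [&& u \in I, v \in I, u != v,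
      ~~ (nbhd e u \subset nbhd e v) & ~~ (nbhd e v \subset nbhd e u)].
Proof.
by rewrite /phi_adj /sigma muln_gt0 !lt0n deg_sub_eta_eq0 etaC deg_sub_eta_eq0.
Qed.

End Neighbourhoods.

Section NestedChain.

Variables (T : finType) (A : nat -> {set T}) (n : nat).

Hypothesis A_step : forall i, i.+1 < n -> ~~ (A i.+1 \subset A i).
Hypothesis A_far :
  forall i j, j < n -> i.+1 < j -> (A i \subset A j) || (A j \subset A i).
Hypothesis A0_max : forall j, j < n -> #|A j| <= #|A 0|.

Lemma chain_far_sub i j : j < n -> i.+1 < j -> A j \subset A i.
Proof.
elim: i => [|i IH] hj hij; case/orP: (A_far _ _ hj hij) => // A_ij.
  by have /eqP <- : A 0 == A j by rewrite eqEcard A_ij A0_max.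
have A_ji : A j \subset A i by apply: IH; lia.
have hi : i.+1 < n by lia.
by have /negP[] := A_step _ hi; exact: subset_trans A_ij A_ji.
Qed.

End NestedChain.

Theorem lemma2p2 (T : finType) (e : rel T) (K I : {set T})
    (n : nat) (v : nat -> T) :
  split_graph e K I ->
  2 <= n ->
  induced_path e I n v ->
  (forall i, i < n -> deg e (v i) <= deg e (v 0)) ->
  forall i j, i < n -> j < n -> i + 2 <= j ->
    deg e (v j) <= deg e (v i) /\ nbhd e (v j) \subset nbhd e (v i).
Proof.
move=> _ _ [inI inj adj nadj] dmax i j _ hj hij.
suff N_ji : nbhd e (v j) \subset nbhd e (v i) by rewrite subset_leq_card.
apply: (@chain_far_sub _ (fun k => nbhd e (v k)) n) => //; last lia.
- by move=> k hk; move: (adj k hk); rewrite phi_adjE => /and5P[].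
- move=> k l hl hkl; have hk : k < n by lia.
  have v_kl : v k != v l by apply/eqP => /(inj _ _ hk hl) ekl; lia.
  by move: (nadj k l hk hl hkl); rewrite phi_adjE !inI // v_kl /= negb_and !negbK.
Qed.
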